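(* Let $\nu$ be a signature and let $\mathcal A\in\widetilde{\mathrm{Hinge}}_n$ be a nondegenerate element lying over the canonical hinge $\mathcal P_{\alpha_1,\dots,\alpha_k}$. Then $\rho_\nu(\mathcal A)\Xi_\nu=c\,\Xi_\nu$ for some $c\in\mathbb C^*$.
   Context: Let $V=\mathbb C^n$ with basis $e_1,\dots,e_n$. A linear relation is a subspace $P\subset V\oplus V$; $\mathrm{Ker}\,P=\{v: v\oplus0\in P\}$, $\mathrm{Dom}\,P,\mathrm{Im}\,P$ the projections to the first and second summands, $\mathrm{Indef}\,P=\{w:0\oplus w\in P\}$, $\mathrm{rk}\,P=\dim\mathrm{Dom}\,P-\dim\mathrm{Ker}\,P$. If $\dim P=n$, choose bases $f_1,\dots,f_a,g_1,\dots,g_b,h_1,\dots,h_c$ and $F_1,\dots,F_a,G_1,\dots,G_b,H_1,\dots,H_c$ of $V$ with $P$ spanned by $0\oplus F_i$, $g_j\oplus G_j$, $h_k\oplus0$; $\lambda(P)$ maps $f_1\wedge\dots\wedge f_a\wedge g_{i_1}\wedge\dots\wedge g_{i_s}$ to $F_1\wedge\dots\wedge F_a\wedge G_{i_1}\wedge\dots\wedge G_{i_s}$ and kills the other basis monomials (up to scalar); $\lambda^m(P)$ its restriction to $\Lambda^mV$. A hinge is a sequence $\mathcal P=(P_1,\dots,P_k)$ of $n$-dimensional relations with $\mathrm{Ker}\,P_j=\mathrm{Dom}\,P_{j+1}$, $\mathrm{Im}\,P_j=\mathrm{Indef}\,P_{j+1}$, $\mathrm{Dom}\,P_1=V$, $\mathrm{Im}\,P_k=V$,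 $\mathrm{rk}\,P_j>0$. For each $m$ there is a nonzero $\lambda^m(P_j)$, and any two nonzero ones are proportional; $\lambda^m(\mathcal P)$ denotes it (up to scalar). $\mathcal A$ lies over $\mathcal P$ if $\mathcal A=(c_0\lambda^0(\mathcal P),\dots,c_n\lambda^n(\mathcal P))$ with $c_j\in\mathbb C$; it is nondegenerate if all $c_j\ne0$; $\widetilde{\mathrm{Hinge}}_n$ is the set of all such tuples. For positive integers $\alpha_1,\dots,\alpha_k$ with sum $n$, the canonical hinge $\mathcal P_{\alpha_1,\dots,\alpha_k}=(P_1,\dots,P_k)$ has $P_j$ spanned by $0\oplus e_\sigma$ for $\sigma\le\alpha_1+\dots+\alpha_{j-1}$, by $e_t\oplus e_t$ for $\alpha_1+\dots+\alpha_{j-1}<t\le\alpha_1+\dots+\alpha_j$, and by $e_\mu\oplus0$ for $\mu>\alpha_1+\dots+\alpha_j$. A signature is $\nu_1\ge\dots\ge\nu_n\ge0$ (integers), $\nu_{n+1}=0$; $\mathfrak H_\nu=\bigotimes_j(\Lambda^jV)^{\otimes(\nu_j-\nu_{j+1})}$; $\Xi_\nu=\bigotimes_j(e_1\wedge\dots\wedge e_j)^{\otimes(\nu_j-\nu_{j+1})}$; $\mathfrak r_\nu(A_0,\dots,A_n)=\bigotimes_jA_j^{\otimes(\nu_j-\nu_{j+1})}$; $H_\nu$ is the span of $\mathfrak r_\nu(\lambda^0_{\mathrm{cha}}(g),\dots,\lambda^n_{\mathrm{cha}}(g))\Xi_\nu$, $g\in\mathrm{GL}_n(\mathbb C)$,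 where $\lambda^j_{\mathrm{cha}}(g)v_1\wedge\dots\wedge v_j=gv_1\wedge\dots\wedge gv_j$; $H_\nu$ is invariant under $\mathfrak r_\nu(\mathcal A)$ for $\mathcal A\in\widetilde{\mathrm{Hinge}}_n$, and $\rho_\nu(\mathcal A)$ is the restriction of $\mathfrak r_\nu(\mathcal A)$ to $H_\nu$. *)

From HB Require Import structures.
From mathcomp Require Import all_boot all_order all_algebra.
From mathcomp Require Import complex.
Set Implicit Arguments. Unset Strict Implicit. Unset Printing Implicit Defensive.
Import Order.TTheory GRing.Theory Num.Theory.
Local Open Scope ring_scope.

(* Conventions:
   - V = C^n with basis e_0..e_{n-1} (0-indexed version of e_1..e_n).
   - The exterior algebra Lambda V is identified with functions
     {set 'I_n} -> C : the coordinate at S is the coefficient of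
     e_{s_1} /\ ... /\ e_{s_k} with s_1 < ... < s_k the elements of S.
     Lambda^m V = the functions supported on sets of size m.
   - An operator on Lambda V (or Lambda^m V) is given by its kernel
     (matrix) K : {set 'I_n} -> {set 'I_n} -> C.
   - A linear relation P in V (+) V is the row space (mxalgebra) of a
     matrix with rows in 'rV_(n + n); the row  row_mx v w  encodes v (+) w. *)

Section Defs.
Variable C : fieldType.
Variable n : nat.

Definition extvec := {set 'I_n} -> C.
Definition extop := {set 'I_n} -> {set 'I_n} -> C.

Definition apply_op (K : extop) (v : extvec) : extvec :=
  fun S => \sum_(T : {set 'I_n}) K S T * v T.

(* wedge of the rows of B indexed by T (in increasing order):
   coordinate at S is the minor of B with rows T and columns S. *)
Definition wedge_rows (B : 'M[C]_n) (T : {set 'I_n}) : extvec :=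
  fun S => if #|S| == #|T| then
     \det (\matrix_(i < #|T|, j < #|T|)
             nth 0 (nth [::] [seq [seq B r c | c <- enum S] | r <- enum T] i) j)
   else 0.

(* lambda(P) for an n-dimensional relation P, for a choice of bases:
   rows 0..a-1 of B are f_1..f_a, rows a..a+b-1 are g_1..g_b,
   rows a+b..n-1 are h_1..h_c; similarly B' carries F, G, H.
   P is spanned by 0(+)F_i, g_j(+)G_j, h_k(+)0. *)
Definition rel_of_bases (a b : nat) (B B' : 'M[C]_n) : 'M[C]_(n, n + n) :=
  \matrix_(i < n) row_mx (if (a <= i)%N then row i B else 0)
                         (if (i < a + b)%N then row i B' else 0).

Definition is_lambda (P : 'M[C]_(n, n + n)) (L : extop) : Prop :=
  exists (a b c : nat) (B B' : 'M[C]_n),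
    [/\ (a + b + c)%N = n, B \in unitmx, B' \in unitmx,
        (P == rel_of_bases a b B B')%MS &
        forall T : {set 'I_n},
          apply_op L (wedge_rows B T) =
          if [forall i : 'I_n, ((i < a)%N ==> (i \in T)) && ((i \in T) ==> (i < a + b)%N)]
          then wedge_rows B' T else (fun _ => 0)].

Definition restr (m : nat) (L : extop) : extop :=
  fun S T => if (#|S| == m) && (#|T| == m) then L S T else 0.

(* A = (A_0, ..., A_n) is a nondegenerate element of tilde Hinge_n lying over
   the hinge Ps: A_m = c_m lambda^m(Ps) with c_m <> 0, where lambda^m(Ps) is
   a nonzero lambda^m(P_j) (for some admissible choice of bases). *)
Definition nondeg_over (Ps : seq 'M[C]_(n, n + n)) (A : nat -> extop) : Prop :=
  forall m, (m <= n)%N ->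
    exists j L, [/\ (j < size Ps)%N, is_lambda (nth 0 Ps j) L,
                    (exists S T, restr m L S T != 0) &
                    exists2 c : C, c != 0 &
                      forall S T, A m S T = c * restr m L S T].

Definition canon_rel (lo hi : nat) : 'M[C]_(n, n + n) :=
  \matrix_(i < n) row_mx (if (lo <= i)%N then delta_mx 0 i else 0)
                         (if (i < hi)%N then delta_mx 0 i else 0).

Definition canon_hinge (alpha : seq nat) : seq 'M[C]_(n, n + n) :=
  [seq canon_rel (sumn (take j alpha)) (sumn (take j.+1 alpha))
     | j <- iota 0 (size alpha)].

(* signature nu = (nu_1, ..., nu_n) stored as a seq; nu_{n+1} = 0 *)
Definition signature (nu : seq nat) : Prop :=
  size nu = n /\ sorted geq nu.

(* degrees of the tensor factors of H_nu = (x)_j (Lambda^j V)^(nu_j - nu_{j+1}) *)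
Definition degs (nu : seq nat) : seq nat :=
  flatten [seq nseq (nth 0 nu j.-1 - nth 0 nu j) j | j <- iota 1 n].

Definition tens (N : nat) := N.-tuple {set 'I_n} -> C.

Definition xi_deg (j : nat) : extvec :=
  fun S => if S == [set i : 'I_n | (i < j)%N] then 1 else 0.

Definition Xi (nu : seq nat) : tens (size (degs nu)) :=
  fun S => \prod_(i < size (degs nu)) xi_deg (nth 0 (degs nu) i) (tnth S i).

(* r_nu(A_0..A_n) = (x)_j A_j^{(x)(nu_j - nu_{j+1})}, applied to a tensor *)
Definition r_nu (nu : seq nat) (A : nat -> extop) (t : tens (size (degs nu)))
  : tens (size (degs nu)) :=
  fun S => \sum_(T : (size (degs nu)).-tuple {set 'I_n})
             (\prod_(i < size (degs nu)) A (nth 0 (degs nu) i) (tnth S i) (tnth T i))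
             * t T.

End Defs.

From HB Require Import structures.
From mathcomp Require Import all_boot all_order all_algebra.
From mathcomp Require Import complex.
From mathcomp Require Import fingroup perm.
Set Implicit Arguments. Unset Strict Implicit. Unset Printing Implicit Defensive.
Import GRing.Theory Num.Theory.
Local Open Scope ring_scope.

(* Let P be the canonical relation spanned by 0 (+) e_i (i < lo), e_i (+) e_i
   (lo <= i < hi) and e_i (+) 0 (hi <= i).  Any bases (f, g, h), (F, G, H)
   presenting P have a = lo and a + b = hi; the matrix B of (f, g, h) is block
   upper triangular, the matrix B' of (F, G, H) block lower triangular, and they
   agree on the middle block.  Splitting minors along these blocks shows that on
   the sets S with [0, lo) <= S <= [0, hi) the minors of B' are a fixed multiple
   kap of those of B.  As the wedges of the rows of B form a basis (Cauchy-Binet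
   for B^-1 B = 1), lambda(P) is kap times the projection onto the span of these
   e_S.  So every nonzero lambda^m of the canonical hinge has e_1 /\ ... /\ e_m
   as an eigenvector with nonzero eigenvalue, and Xi_nu, a tensor product of such
   vectors, is an eigenvector of rho_nu(A). *)

Section CauchyBinet.
Variables (C : fieldType) (n : nat) (x0 : 'I_n).

Definition enum_nth (T : {set 'I_n}) (j : nat) : 'I_n := nth x0 (enum T) j.

Lemma enum_nth_mem (T : {set 'I_n}) j : (j < #|T|)%N -> enum_nth T j \in T.
Proof. by move=> hj; rewrite -mem_enum mem_nth // -cardE. Qed.

Lemma enum_nth_inj (T : {set 'I_n}) i j :
  (i < #|T|)%N -> (j < #|T|)%N -> enum_nth T i = enum_nth T j -> i = j.
Proof. by move=> hi hj /eqP; rewrite nth_uniq ?enum_uniq -?cardE // => /eqP. Qed.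

Lemma enum_nth_index (T : {set 'I_n}) t : t \in T -> enum_nth T (index t (enum T)) = t.
Proof. by move=> ht; rewrite /enum_nth nth_index // mem_enum. Qed.

Lemma index_enum_lt (T : {set 'I_n}) t : t \in T -> (index t (enum T) < #|T|)%N.
Proof. by move=> ht; rewrite cardE index_mem mem_enum. Qed.

Lemma det_mulmx_ffun_sum k (A : 'M[C]_(k, n)) (B : 'M[C]_(n, k)) :
  \det (A *m B) = \sum_(f : {ffun 'I_k -> 'I_n})
     (\prod_i A i (f i)) * \det (\matrix_(i, j) B (f i) j).
Proof.
rewrite /determinant.
rewrite (eq_bigr (fun s : 'S_k => \sum_(f : {ffun 'I_k -> 'I_n}) (-1) ^+ s *
           \prod_i (A i (f i) * B (f i) (s i)))); last first.
  move=> s _; rewrite -big_distrr /=; congr (_ * _).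
  rewrite -(bigA_distr_bigA (fun i l => A i l * B l (s i))).
  by apply: eq_bigr => i _; rewrite mxE.
rewrite exchange_big; apply: eq_bigr => f _; rewrite big_distrr.
apply: eq_bigr => s _; rewrite big_split /= mulrCA; congr (_ * (_ * _)).
by apply: eq_bigr => i _; rewrite mxE.
Qed.

Lemma injective_image_enum_nth k (T : {set 'I_n}) (f : {ffun 'I_k -> 'I_n}) : #|T| = k ->
  injectiveb f && ([set f i | i : 'I_k] == T) =
  (f \in [set [ffun i => enum_nth T (s i)] | s : 'S_k in [set: 'S_k]]).
Proof.
move=> hT; apply/idP/idP.
  case/andP => /injectiveP finj /eqP fimg.
  have fT i : f i \in T by rewrite -fimg; apply: imset_f.
  have gP i : (index (f i) (enum T) < k)%N by have := index_enum_lt (fT i); rewrite hT.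
  have g_inj : injective (fun i => Ordinal (gP i)).
    move=> i1 i2 /(congr1 val) /= E; apply: finj.
    by rewrite -(enum_nth_index (fT i1)) E enum_nth_index.
  apply/imsetP; exists (perm g_inj) => //; apply/ffunP => i.
  by rewrite ffunE permE /= enum_nth_index.
case/imsetP => s _ ->; apply/andP; split.
  apply/injectiveP => i1 i2; rewrite !ffunE => /enum_nth_inj; rewrite hT => H.
  by apply: (perm_inj (s := s)); apply/val_inj/H.
apply/eqP/setP => t; apply/imsetP/idP.
  by case=> i _ ->; rewrite ffunE enum_nth_mem // hT.
move=> tT; have jP := index_enum_lt tT; rewrite hT in jP.
by exists (s^-1 (Ordinal jP))%g => //; rewrite ffunE permKV /= enum_nth_index.
Qed.

Lemma cauchy_binet k (A : 'M[C]_(k, n)) (B : 'M[C]_(n, k)) :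
  \det (A *m B) = \sum_(T : {set 'I_n} | #|T| == k)
     \det (\matrix_(i, j) A i (enum_nth T j)) *
     \det (\matrix_(i, j) B (enum_nth T i) j).
Proof.
pose G (f : {ffun 'I_k -> 'I_n}) :=
  (\prod_i A i (f i)) * \det (\matrix_(i, j) B (f i) j).
have G_noninj (f : {ffun 'I_k -> 'I_n}) : ~~ injectiveb f -> G f = 0.
  case/injectivePn => i1 [i2 Di12 Ef12]; rewrite /G.
  by rewrite (determinant_alternate Di12) ?mulr0 // => j; rewrite !mxE Ef12.
rewrite det_mulmx_ffun_sum -/G (bigID (fun f : {ffun 'I_k -> 'I_n} => injectiveb f)) /=.
rewrite [X in _ + X]big1 ?addr0; last by move=> f /G_noninj.
rewrite (partition_big (fun f : {ffun 'I_k -> 'I_n} => [set f i | i : 'I_k]) predT) //=.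
rewrite (bigID (fun T : {set 'I_n} => #|T| == k)) /= [X in _ + X]big1 ?addr0; last first.
  move=> T hT; apply: big1 => f /andP [/injectiveP hf /eqP hT'].
  by move: hT; rewrite -hT' card_imset // card_ord eqxx.
apply: eq_bigr => T /eqP hT.
pose h (s : 'S_k) : {ffun 'I_k -> 'I_n} := [ffun i => enum_nth T (s i)].
have h_inj : injective h.
  move=> s1 s2 /ffunP E; apply/permP => i; move: (E i); rewrite !ffunE.
  by move/enum_nth_inj; rewrite hT => H; apply/val_inj/H.
rewrite (eq_bigl _ _ (fun f => injective_image_enum_nth f hT)) big_imset; last first.
  by move=> s1 s2 _ _; apply: h_inj.
rewrite [\det (\matrix_(i, j) A i _)]/determinant big_distrl /=.
rewrite (eq_bigl predT) => [|s]; last by rewrite in_setT.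
apply: eq_bigr => s _; rewrite /G.
have -> : \matrix_(i, j) B (h s i) j = row_perm s (\matrix_(i, j) B (enum_nth T i) j).
  by apply/matrixP => i j; rewrite !mxE ffunE.
rewrite row_permE det_mulmx det_perm /determinant mulrA; congr (_ * _).
by rewrite mulrC; congr (_ * _); apply: eq_bigr => i _; rewrite mxE ffunE.
Qed.

End CauchyBinet.

Section Minors.
Variables (C : fieldType) (n : nat) (x0 : 'I_n).

Definition minor_mx p q (M : 'M[C]_n) (s t : seq 'I_n) : 'M[C]_(p, q) :=
  \matrix_(i, j) M (nth x0 s i) (nth x0 t j).

Lemma wedge_rowsE (M : 'M[C]_n) (T S : {set 'I_n}) : wedge_rows M T S =
  if #|S| == #|T| then \det (minor_mx #|T| #|T| M (enum T) (enum S)) else 0.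
Proof.
rewrite /wedge_rows; case: eqP => // hST; congr (\det _); apply/matrixP => i j.
by rewrite !mxE (nth_map x0) -?cardE // (nth_map x0) // -cardE hST.
Qed.

Lemma wedge_rows_card k (M : 'M[C]_n) (T S : {set 'I_n}) : #|T| = k -> #|S| = k ->
  wedge_rows M T S = \det (minor_mx k k M (enum T) (enum S)).
Proof. by move=> <- hS; rewrite wedge_rowsE hS eqxx. Qed.

Lemma wedge_rows_tr (M : 'M[C]_n) (T S : {set 'I_n}) :
  wedge_rows M^T S T = wedge_rows M T S.
Proof.
have [hST | hST] := eqVneq #|S| #|T|; last by rewrite !wedge_rowsE eq_sym (negbTE hST).
rewrite !(wedge_rows_card (k := #|T|)) // -det_tr.
by congr (\det _); apply/matrixP => i j; rewrite !mxE.
Qed.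

Lemma wedge_rows_full (M : 'M[C]_n) : wedge_rows M [set: 'I_n] [set: 'I_n] = \det M.
Proof.
have enumT_nth (k : 'I_n) : nth x0 (enum [set: 'I_n]) k = k.
  by apply: val_inj; rewrite enum_setT -enumT /= nth_enum_ord.
rewrite (wedge_rows_card (k := n)) ?cardsT ?card_ord //.
by congr (\det _); apply/matrixP => i j; rewrite mxE !enumT_nth.
Qed.

Lemma wedge_rows_mul (M N : 'M[C]_n) (U S : {set 'I_n}) : #|U| = #|S| ->
  \sum_T wedge_rows M U T * wedge_rows N T S = wedge_rows (M *m N) U S.
Proof.
move=> hUS; rewrite (wedge_rows_card (k := #|S|)) //.
have -> : minor_mx #|S| #|S| (M *m N) (enum U) (enum S) =
   (\matrix_(i, l) M (nth x0 (enum U) i) l) *m (\matrix_(l, j) N l (nth x0 (enum S) j)).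
  by apply/matrixP => i j; rewrite !mxE; apply: eq_bigr => l _; rewrite !mxE.
rewrite (cauchy_binet x0) (bigID (fun T : {set 'I_n} => #|T| == #|S|)) /=.
rewrite [X in _ + X]big1 ?addr0; last first.
  by move=> T hT; rewrite wedge_rowsE hUS (negbTE hT) mul0r.
apply: eq_bigr => T /eqP hT; rewrite !(wedge_rows_card (k := #|S|)) //.
by congr (_ * _); congr (\det _); apply/matrixP => i j; rewrite !mxE.
Qed.

Lemma det_row0 k (A : 'M[C]_k) i : (forall j, A i j = 0) -> \det A = 0.
Proof. by move=> Ai0; rewrite (expand_det_row _ i) big1 // => j _; rewrite Ai0 mul0r. Qed.

Lemma wedge_rows_row0 (M : 'M[C]_n) (T S : {set 'I_n}) x :
  x \in T -> (forall y, y \in S -> M x y = 0) -> wedge_rows M T S = 0.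
Proof.
move=> xT Mx0; rewrite wedge_rowsE; case: eqP => // hST.
apply: (det_row0 (i := Ordinal (index_enum_lt xT))) => j; rewrite mxE /=.
by rewrite nth_index ?mem_enum // Mx0 // (enum_nth_mem x0) // hST.
Qed.

Lemma wedge_rows_col0 (M : 'M[C]_n) (T S : {set 'I_n}) y :
  y \in S -> (forall x, x \in T -> M x y = 0) -> wedge_rows M T S = 0.
Proof.
by move=> yS My0; rewrite -wedge_rows_tr (wedge_rows_row0 yS) // => x /My0; rewrite mxE.
Qed.

Lemma wedge_rows1 (U S : {set 'I_n}) : #|U| = #|S| ->
  wedge_rows (1%:M : 'M[C]_n) U S = (U == S)%:R.
Proof.
move=> hUS; have [<-|neqUS] := eqVneq U S.
  rewrite (wedge_rows_card (k := #|U|)) // -[RHS](det1 C #|U|); congr (\det _).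
  apply/matrixP => i j; rewrite !mxE; congr (_ %:R).
  by rewrite (nth_uniq x0) ?enum_uniq -?cardE.
have [u uU uS] : exists2 u, u \in U & u \notin S.
  apply/exists_inP; rewrite -negb_forall_in; apply: contra neqUS => /forall_inP sub.
  by rewrite eqEcard hUS leqnn andbT; apply/subsetP => x /sub.
by apply: (wedge_rows_row0 uU) => y yS; rewrite mxE; case: eqP => // uy; rewrite uy yS in uS.
Qed.

Lemma wedge_rows_invmx (B : 'M[C]_n) (U T : {set 'I_n}) : B \in unitmx ->
  \sum_V wedge_rows (invmx B) U V * wedge_rows B V T = (U == T)%:R.
Proof.
move=> Bu; have [hUT | hUT] := eqVneq #|U| #|T|.
  by rewrite wedge_rows_mul // mulVmx // wedge_rows1.
rewrite big1; last first.
  move=> V _; rewrite !wedge_rowsE.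
  case: eqP => [hVU|_]; case: eqP => [hTV|_]; rewrite ?mulr0 ?mul0r //.
  by move: hUT; rewrite -hVU hTV eqxx.
by case: eqP => // E; move: hUT; rewrite E eqxx.
Qed.

End Minors.

Section BlockMinors.
Variables (C : fieldType) (n : nat) (x0 : 'I_n).

Lemma det_eq0_top_rows k (A : 'M[C]_k) p q : (q < p)%N -> (p <= k)%N ->
  (forall i j : 'I_k, (i < p)%N -> (q <= j)%N -> A i j = 0) -> \det A = 0.
Proof.
move=> hqp hpk A0; apply/eqP; apply: contraT => detA.
have pidE (r : nat) (i j : 'I_k) : (pid_mx r : 'M[C]_k) i j = ((i == j) && (i < r)%N)%:R.
  by rewrite mxE.
have pidA_E i j : ((pid_mx p : 'M[C]_k) *m A) i j = (i < p)%:R * A i j.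
  rewrite mxE (bigD1 i) //= big1 ?addr0 => [|l li]; first by rewrite pidE eqxx.
  by rewrite pidE eq_sym (negbTE li) mul0r.
(* pid_mx p *m A keeps the top p rows of A, which live in the first q < p columns *)
have pidA_q : (pid_mx p : 'M[C]_k) *m A = pid_mx p *m A *m (pid_mx q : 'M[C]_k).
  apply/matrixP => i j; rewrite [RHS]mxE (bigD1 j) //= big1 ?addr0; last first.
    by move=> l /negbTE lj; rewrite pidE lj mulr0.
  rewrite pidE eqxx pidA_E /=; case: (ltnP i p) => hi; last by rewrite !mul0r.
  by case: (ltnP j q) => hj; rewrite ?mulr1 // A0 // mulr0 mul0r.
have rank_le_q : (\rank ((pid_mx p : 'M[C]_k) *m A *m (pid_mx q : 'M[C]_k)) <= q)%N.
  by apply: leq_trans (mxrankM_maxr _ _) _; rewrite rank_pid_mx // ltnW // (leq_trans hqp).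
move: rank_le_q; rewrite -pidA_q mxrankMfree ?row_free_unit ?unitmxE ?unitfE //.
by rewrite rank_pid_mx // leqNgt hqp.
Qed.

Lemma det_eq0_left_cols k (A : 'M[C]_k) p q : (q < p)%N -> (p <= k)%N ->
  (forall i j : 'I_k, (j < p)%N -> (q <= i)%N -> A i j = 0) -> \det A = 0.
Proof.
by move=> hqp hpk A0; rewrite -det_tr (det_eq0_top_rows hqp hpk) // => i j hi hj; rewrite mxE A0.
Qed.

Definition lowS p : {set 'I_n} := [set i : 'I_n | (i < p)%N].

Lemma card_lowS p : (p <= n)%N -> #|lowS p| = p.
Proof.
move=> hp; have -> : lowS p = [set widen_ord hp i | i : 'I_p].
  apply/setP => x; rewrite inE; apply/idP/imsetP => [hx|[i _ ->]]; last by rewrite /= ltn_ord.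
  by exists (Ordinal hx) => //; apply: val_inj.
by rewrite card_imset ?card_ord // => i j /(congr1 val) /= E; apply: val_inj.
Qed.

Lemma filter_ltn_sorted_cat (s : seq 'I_n) (P : pred 'I_n) p :
  sorted (fun x y : 'I_n => (x < y)%N) s ->
  filter P s = filter (fun x => P x && (x < p)%N) s ++ filter (fun x => P x && (p <= x)%N) s.
Proof.
elim: s => //= x s IHs hs; rewrite IHs ?(path_sorted hs) //.
have s_gt_x : all (fun y : 'I_n => (x < y)%N) s.
  by apply: order_path_min hs => u v w; apply: ltn_trans.
case: (leqP p x) => hx; last by rewrite andbT andbF; case: (P x).
rewrite andbF andbT /= (@eq_in_filter _ _ pred0) ?filter_pred0 //=.
by move=> y /(allP s_gt_x) hy /=; rewrite ltnNge (leq_trans hx) ?andbF // ltnW.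
Qed.

Lemma enum_lowS_cat (T : {set 'I_n}) p :
  enum T = enum (T :&: lowS p) ++ enum (T :\: lowS p).
Proof.
have enum_ord_sorted : sorted (fun x y : 'I_n => (x < y)%N) (enum 'I_n).
  by have := iota_ltn_sorted 0 n; rewrite -val_enum_ord sorted_map.
have enumE (A : {set 'I_n}) : enum A = filter (mem A) (enum 'I_n) by rewrite enumT.
rewrite !enumE (filter_ltn_sorted_cat _ p enum_ord_sorted).
by congr (_ ++ _); apply: eq_filter => x /=; rewrite !inE // -leqNgt andbC.
Qed.

Lemma det_minor_ublock p q (M : 'M[C]_n) s1 s2 t1 t2 : size s1 = p -> size t1 = p ->
  (forall i j, (i < q)%N -> (j < p)%N -> M (nth x0 s2 i) (nth x0 t1 j) = 0) ->
  \det (minor_mx x0 (p + q) (p + q) M (s1 ++ s2) (t1 ++ t2)) =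
    \det (minor_mx x0 p p M s1 t1) * \det (minor_mx x0 q q M s2 t2).
Proof.
move=> hs1 ht1 M0; rewrite -(det_ublock _ (minor_mx x0 p q M s1 t2)); congr (\det _).
apply/matrixP => i j; rewrite -(splitK i) -(splitK j).
case: (split i) => i'; case: (split j) => j' /=;
  rewrite ?block_mxEul ?block_mxEur ?block_mxEdl ?block_mxEdr !mxE /= !nth_cat
          ?hs1 ?ht1 ?ltn_ord ?(ltnNge (p + _)) ?leq_addr ?addKn //=.
by rewrite M0.
Qed.

Lemma card_setD_lowS (T S : {set 'I_n}) p :
  #|T :&: lowS p| = #|S :&: lowS p| -> #|T| = #|S| ->
  #|T :\: lowS p| = #|S :\: lowS p|.
Proof.
by move=> hlow hTS; apply/eqP; rewrite -(eqn_add2l #|T :&: lowS p|) cardsID hlow cardsID hTS.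
Qed.

Lemma wedge_rows_ublock (M : 'M[C]_n) (T S : {set 'I_n}) p :
  #|T :&: lowS p| = #|S :&: lowS p| -> #|T| = #|S| ->
  (forall x y, x \in T -> (p <= x)%N -> y \in S -> (y < p)%N -> M x y = 0) ->
  wedge_rows M T S = wedge_rows M (T :&: lowS p) (S :&: lowS p) *
                     wedge_rows M (T :\: lowS p) (S :\: lowS p).
Proof.
move=> hlow hTS M0; have hhigh := card_setD_lowS hlow hTS.
rewrite (wedge_rows_card x0 (k := (#|T :&: lowS p| + #|T :\: lowS p|)%N)); first last.
- by rewrite hlow hhigh cardsID.
- by rewrite cardsID.
rewrite (wedge_rows_card x0 (k := #|T :&: lowS p|)) //.
rewrite (wedge_rows_card x0 (k := #|T :\: lowS p|)) //.
rewrite (enum_lowS_cat T p) (enum_lowS_cat S p) det_minor_ublock -?cardE // => i j hi hj.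
have /setDP[xT] := enum_nth_mem x0 hi; rewrite inE -leqNgt => hx.
rewrite hlow in hj; have /setIP[yS] := enum_nth_mem x0 hj; rewrite inE => hy.
exact: M0.
Qed.

Lemma wedge_rows_lblock (M : 'M[C]_n) (T S : {set 'I_n}) p :
  #|T :&: lowS p| = #|S :&: lowS p| -> #|T| = #|S| ->
  (forall x y, x \in T -> (x < p)%N -> y \in S -> (p <= y)%N -> M x y = 0) ->
  wedge_rows M T S = wedge_rows M (T :&: lowS p) (S :&: lowS p) *
                     wedge_rows M (T :\: lowS p) (S :\: lowS p).
Proof.
move=> hlow hTS M0; rewrite -!(wedge_rows_tr x0 M) (wedge_rows_ublock (p := p)) //.
by move=> y x yS hy xT hx; rewrite mxE M0.
Qed.

Lemma wedge_rows_eq0_low (M : 'M[C]_n) (T S : {set 'I_n}) p :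
  (#|S :&: lowS p| < #|T :&: lowS p|)%N ->
  (forall x y, x \in T -> (x < p)%N -> y \in S -> (p <= y)%N -> M x y = 0) ->
  wedge_rows M T S = 0.
Proof.
move=> hlt M0; rewrite (wedge_rowsE x0); case: eqP => // hST.
rewrite (enum_lowS_cat T p) (enum_lowS_cat S p).
apply: (det_eq0_top_rows hlt); first by rewrite -(cardsID (lowS p) T) leq_addr.
move=> i j hi hj; rewrite mxE !nth_cat -!cardE hi ltnNge hj /=.
have hj' : (j - #|S :&: lowS p| < #|S :\: lowS p|)%N.
  by rewrite ltn_subLR // cardsID hST.
have /setIP[xT] := enum_nth_mem x0 hi; rewrite inE => hx.
have /setDP[yS] := enum_nth_mem x0 hj'; rewrite inE -leqNgt => hy.
exact: M0.
Qed.

Lemma wedge_rows_eq0_high (M : 'M[C]_n) (T S : {set 'I_n}) p :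
  (#|T :&: lowS p| < #|S :&: lowS p|)%N ->
  (forall x y, x \in T -> (p <= x)%N -> y \in S -> (y < p)%N -> M x y = 0) ->
  wedge_rows M T S = 0.
Proof.
move=> hlt M0; rewrite -(wedge_rows_tr x0) (wedge_rows_eq0_low hlt) //.
by move=> y x yS hy xT hx; rewrite mxE M0.
Qed.

Lemma wedge_rows_ext (M M' : 'M[C]_n) (T S : {set 'I_n}) :
  (forall x y, x \in T -> y \in S -> M x y = M' x y) ->
  wedge_rows M T S = wedge_rows M' T S.
Proof.
move=> eqM; rewrite !(wedge_rowsE x0); case: eqP => // hST; congr (\det _).
by apply/matrixP => i j; rewrite !mxE eqM // (enum_nth_mem x0) // hST.
Qed.

End BlockMinors.

Section Between.
Variable n : nat.

Definition between lo hi (T : {set 'I_n}) : bool :=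
  (lowS n lo \subset T) && (T \subset lowS n hi).

Lemma betweenE lo hi (T : {set 'I_n}) :
  [forall i : 'I_n, ((i < lo)%N ==> (i \in T)) && ((i \in T) ==> (i < hi)%N)] =
  between lo hi T.
Proof.
apply/forallP/andP => [bT | [/subsetP loT /subsetP Thi] i].
  by split; apply/subsetP => i; have /andP[/implyP ? /implyP ?] := bT i; rewrite inE; auto.
apply/andP; split; apply/implyP => hi'; first by apply: loT; rewrite inE.
by have := Thi i hi'; rewrite inE.
Qed.

Lemma between_setI_lowS lo hi (T : {set 'I_n}) :
  between lo hi T -> T :&: lowS n lo = lowS n lo.
Proof. by case/andP => /setIidPr. Qed.

Lemma between_lt lo hi (T : {set 'I_n}) x : between lo hi T -> x \in T -> (x < hi)%N.
Proof. by case/andP => _ /subsetP Thi /Thi; rewrite inE. Qed.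

Lemma notbetween lo hi (T : {set 'I_n}) : ~~ between lo hi T ->
  (#|T :&: lowS n lo| < #|lowS n lo|)%N \/ exists2 x, x \in T & (hi <= x)%N.
Proof.
rewrite negb_and => /orP [loT | /subsetPn [x xT]]; last by rewrite inE -leqNgt; right; exists x.
left; rewrite proper_card // properEneq subsetIr andbT.
by apply: contraNneq loT => <-; apply: subsetIl.
Qed.

Lemma between_lowS lo m hi : (lo <= m)%N -> (m <= hi)%N -> between lo hi (lowS n m).
Proof.
by move=> hlo hhi; apply/andP; split; apply/subsetP => i; rewrite !inE => h;
  [apply: leq_trans hlo | apply: leq_trans hhi].
Qed.

End Between.

Section CanonBases.
Variables (C : fieldType) (n a b lo hi : nat) (B B' : 'M[C]_n).
Hypothesis rel_sub : (rel_of_bases a b B B' <= canon_rel C n lo hi)%MS.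

Lemma rel_of_bases_canon_row (i : 'I_n) : exists x : 'I_n -> C, forall j : 'I_n,
  (if (a <= i)%N then B i j else 0) = x j * (lo <= j)%:R /\
  (if (i < a + b)%N then B' i j else 0) = x j * (j < hi)%:R.
Proof.
have /submxP [D rowE] : (row i (rel_of_bases a b B B') <= canon_rel C n lo hi)%MS.
  exact: submx_trans (row_sub _ _) rel_sub.
have rowE' k : rel_of_bases a b B B' i k = \sum_l D 0 l * canon_rel C n lo hi l k.
  by have := congr1 (fun M : 'M[C]_(1, n + n) => M 0 k) rowE; rewrite !mxE.
have canon_delta (l j : 'I_n) (c : bool) :
    (if c then delta_mx 0 l else 0 : 'M[C]_(1, n)) 0 j = (c && (l == j))%:R.
  by case: c; rewrite mxE // eq_sym.
exists (fun j => D 0 j) => j; split.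
- have -> : (if (a <= i)%N then B i j else 0) = rel_of_bases a b B B' i (lshift n j).
    by rewrite mxE row_mxEl; case: ifP; rewrite mxE.
  rewrite rowE' (bigD1 j) //= big1 ?addr0 => [|l lj]; rewrite mxE row_mxEl canon_delta.
    by rewrite eqxx andbT.
  by rewrite (negbTE lj) andbF mulr0.
- have -> : (if (i < a + b)%N then B' i j else 0) = rel_of_bases a b B B' i (rshift n j).
    by rewrite mxE row_mxEr; case: ifP; rewrite mxE.
  rewrite rowE' (bigD1 j) //= big1 ?addr0 => [|l lj]; rewrite mxE row_mxEr canon_delta.
    by rewrite eqxx andbT.
  by rewrite (negbTE lj) andbF mulr0.
Qed.

Lemma rel_src_low0 (i j : 'I_n) : (a <= i)%N -> (j < lo)%N -> B i j = 0.
Proof.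
move=> hI hJ; have [x /(_ j) [+ _]] := rel_of_bases_canon_row i.
by rewrite hI leqNgt hJ mulr0.
Qed.

Lemma rel_src_ker0 (i j : 'I_n) : (a + b <= i)%N -> (j < hi)%N -> B i j = 0.
Proof.
move=> hI hJ; have [x /(_ j) []] := rel_of_bases_canon_row i.
by rewrite ltnNge hI hJ (leq_trans (leq_addr b a) hI) mulr1 => -> <-; rewrite mul0r.
Qed.

Lemma rel_tgt_indef0 (i j : 'I_n) : (i < a)%N -> (lo <= j)%N -> B' i j = 0.
Proof.
move=> hI hJ; have [x /(_ j) []] := rel_of_bases_canon_row i.
by rewrite leqNgt hI hJ ltn_addr // mulr1 => <- ->; rewrite mul0r.
Qed.

Lemma rel_tgt_high0 (i j : 'I_n) : (i < a + b)%N -> (hi <= j)%N -> B' i j = 0.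
Proof.
move=> hI hJ; have [x /(_ j) [_ +]] := rel_of_bases_canon_row i.
by rewrite hI ltnNge hJ mulr0.
Qed.

Lemma rel_src_tgt_eq (i j : 'I_n) : (a <= i < a + b)%N -> (lo <= j < hi)%N -> B i j = B' i j.
Proof.
case/andP=> hI1 hI2 /andP[hJ1 hJ2]; have [x /(_ j) []] := rel_of_bases_canon_row i.
by rewrite hI1 hI2 hJ1 hJ2 => -> ->.
Qed.

Lemma rel_of_bases_canon_dims : B \in unitmx -> B' \in unitmx ->
  (a + b <= n)%N -> (lo <= hi)%N -> (hi <= n)%N -> a = lo /\ (a + b)%N = hi.
Proof.
rewrite !unitmxE !unitfE => detB detB' habn hlohi hhn.
have han : (a <= n)%N := leq_trans (leq_addr b a) habn.
have a_le_lo : (a <= lo)%N.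
  rewrite leqNgt; apply: contra detB' => hlt; apply/eqP/(det_eq0_top_rows hlt han).
  by move=> i j hI hJ; apply: rel_tgt_indef0.
have lo_le_a : (lo <= a)%N.
  rewrite leqNgt; apply: contra detB => hlt.
  apply/eqP/(det_eq0_left_cols hlt (leq_trans hlohi hhn)).
  by move=> i j hJ hI; apply: rel_src_low0.
have ab_le_hi : (a + b <= hi)%N.
  rewrite leqNgt; apply: contra detB' => hlt; apply/eqP/(det_eq0_top_rows hlt habn).
  by move=> i j hI hJ; apply: rel_tgt_high0.
have hi_le_ab : (hi <= a + b)%N.
  rewrite leqNgt; apply: contra detB => hlt; apply/eqP/(det_eq0_left_cols hlt hhn).
  by move=> i j hJ hI; apply: rel_src_ker0.
by split; apply/eqP; rewrite eqn_leq ?a_le_lo ?lo_le_a ?ab_le_hi ?hi_le_ab.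
Qed.

End CanonBases.

Section TriangularBases.
Variables (C : fieldType) (n lo hi : nat) (x0 : 'I_n) (B B' : 'M[C]_n).
Hypothesis B_low0 : forall i j : 'I_n, (lo <= i)%N -> (j < lo)%N -> B i j = 0.
Hypothesis B_high0 : forall i j : 'I_n, (hi <= i)%N -> (j < hi)%N -> B i j = 0.
Hypothesis B'_low0 : forall i j : 'I_n, (i < lo)%N -> (lo <= j)%N -> B' i j = 0.
Hypothesis B'_high0 : forall i j : 'I_n, (i < hi)%N -> (hi <= j)%N -> B' i j = 0.
Hypothesis BB'_mid : forall i j : 'I_n, (lo <= i < hi)%N -> (lo <= j < hi)%N -> B i j = B' i j.
Hypothesis B_unit : B \in unitmx.

Lemma wedge_rows_between_ratio : exists kap : C, forall T S : {set 'I_n},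
  (if between lo hi T then wedge_rows B' T S else 0) =
  kap * (if between lo hi S then wedge_rows B T S else 0).
Proof.
pose low := lowS n lo.
have wB_low : wedge_rows B low low != 0.
  have B_split := wedge_rows_ublock x0 (T := setT) (S := setT) (p := lo) erefl erefl
    (fun x y _ hx _ hy => B_low0 hx hy).
  move: B_unit; rewrite unitmxE unitfE -(wedge_rows_full x0) B_split setTI.
  by apply: contra => /eqP ->; rewrite mul0r.
exists (wedge_rows B' low low / wedge_rows B low low) => T S.
have [hST | hST] := eqVneq #|S| #|T|; last first.
  rewrite [wedge_rows B' T S](wedge_rowsE x0) [wedge_rows B T S](wedge_rowsE x0).
  by rewrite (negbTE hST) !if_same mulr0.
case bT: (between lo hi T); case bS: (between lo hi S); rewrite ?mulr0 //.
- have Tlow := between_setI_lowS bT; have Slow := between_setI_lowS bS.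
  rewrite (wedge_rows_lblock x0 (p := lo)) ?Tlow ?Slow ?(esym hST) //; last first.
    by move=> x y _ hx _ hy; apply: B'_low0.
  rewrite [wedge_rows B T S](wedge_rows_ublock x0 (p := lo)) ?Tlow ?Slow ?(esym hST) //; last first.
    by move=> x y _ hx _ hy; apply: B_low0.
  rewrite (wedge_rows_ext x0 (M := B') (M' := B) (T := T :\: low)); last first.
    move=> x y /setDP[xT]; rewrite inE -leqNgt => hx /setDP[yS]; rewrite inE -leqNgt => hy.
    by symmetry; apply: BB'_mid; rewrite ?hx ?hy ?(between_lt bT xT) ?(between_lt bS yS).
  by rewrite mulrA divfK.
- case: (notbetween (negbT bS)) => [hlt | [y yS hy]].
    apply: (wedge_rows_eq0_low x0 (p := lo) _ (fun x y _ hx _ hy => B'_low0 hx hy)).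
    by rewrite (between_setI_lowS bT).
  by apply: (wedge_rows_col0 x0 yS) => x xT; apply: B'_high0 (between_lt bT xT) hy.
- case: (notbetween (negbT bT)) => [hlt | [x xT hx]].
    have B_low0' x y : x \in T -> (lo <= x)%N -> y \in S -> (y < lo)%N -> B x y = 0.
      by move=> _ hx _ hy; apply: B_low0.
    rewrite (wedge_rows_eq0_high x0 _ B_low0') ?mulr0 //.
    by rewrite (between_setI_lowS bS).
  by rewrite (wedge_rows_row0 x0 xT) ?mulr0 // => y yS; apply: B_high0 hx (between_lt bS yS).
Qed.

End TriangularBases.

Section LambdaCanon.
Variables (C : fieldType) (n : nat) (x0 : 'I_n).

Lemma extop_eq_on_wedge_rows (B : 'M[C]_n) (L L' : extop C n) : B \in unitmx ->
  (forall T S, apply_op L (wedge_rows B T) S = apply_op L' (wedge_rows B T) S) ->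
  forall S U, L S U = L' S U.
Proof.
move=> Bu eqL.
have recover (K : extop C n) S U :
    K S U = \sum_V wedge_rows (invmx B) U V * apply_op K (wedge_rows B V) S.
  transitivity (\sum_T K S T * (U == T)%:R).
    rewrite (bigD1 U) //= eqxx mulr1 big1 ?addr0 // => T TU.
    by rewrite eq_sym (negbTE TU) mulr0.
  under eq_bigr do rewrite -(wedge_rows_invmx x0 _ _ Bu) big_distrr.
  rewrite exchange_big; apply: eq_bigr => V _; rewrite /apply_op big_distrr.
  by apply: eq_bigr => T _; rewrite /= mulrCA.
by move=> S U; rewrite !recover; apply: eq_bigr => V _; rewrite eqL.
Qed.

Lemma lambda_canon_rel lo hi (L : extop C n) : (lo <= hi)%N -> (hi <= n)%N ->
  is_lambda (canon_rel C n lo hi) L ->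
  exists kap : C, forall S U, L S U = kap * ((S == U) && between lo hi S)%:R.
Proof.
move=> hlohi hhn [a [b [c [B [B' [habc Bu B'u /andP[_ rel_sub] lamL]]]]]].
have habn : (a + b <= n)%N by rewrite -habc leq_addr.
have [a_lo ab_hi] := rel_of_bases_canon_dims rel_sub Bu B'u habn hlohi hhn.
subst lo hi.
have [kap ratio] := wedge_rows_between_ratio x0 (rel_src_low0 rel_sub)
  (rel_src_ker0 rel_sub) (rel_tgt_indef0 rel_sub) (rel_tgt_high0 rel_sub)
  (rel_src_tgt_eq rel_sub) Bu.
exists kap; apply: (extop_eq_on_wedge_rows Bu) => T S.
have -> : apply_op L (wedge_rows B T) S = if between a (a + b) T then wedge_rows B' T S else 0.
  by rewrite lamL betweenE; case: ifP.
rewrite ratio /apply_op (bigD1 S) //= big1 ?addr0 => [|U /negbTE SU]; last first.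
  by rewrite eq_sym SU mulr0 mul0r.
by rewrite eqxx /=; case: ifP; rewrite ?mulr1 ?mulr0 ?mul0r.
Qed.

End LambdaCanon.

Section CanonHinge.
Variables (C : fieldType) (n : nat).

Lemma nth_canon_hinge (alpha : seq nat) j : (j < size alpha)%N ->
  nth 0 (canon_hinge C n alpha) j =
  canon_rel C n (sumn (take j alpha)) (sumn (take j.+1 alpha)).
Proof. by move=> hj; rewrite /canon_hinge (nth_map 0%N) ?size_iota // nth_iota. Qed.

Lemma xi_degE m (S : {set 'I_n}) : xi_deg C (n := n) m S = (S == lowS n m)%:R.
Proof. by rewrite /xi_deg; case: eqP. Qed.

Lemma nondeg_over_canon_col (alpha : seq nat) (A : nat -> extop C n) m :
  sumn alpha = n -> nondeg_over (canon_hinge C n alpha) A -> (0 < m <= n)%N ->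
  A m (lowS n m) (lowS n m) != 0 /\
  forall S, A m S (lowS n m) = A m (lowS n m) (lowS n m) * xi_deg C (n := n) m S.
Proof.
move=> sum_alpha nondegA /andP[m_gt0 m_le_n].
have x0 : 'I_n := Ordinal (leq_trans m_gt0 m_le_n).
have [j [L [+ lamL [S0 [T0 L_nz]] [c c_nz Am]]]] := nondegA m m_le_n.
rewrite size_map size_iota => j_lt; rewrite nth_canon_hinge // in lamL.
set lo := sumn (take j alpha) in lamL; set hi := sumn (take j.+1 alpha) in lamL.
have lo_le_hi : (lo <= hi)%N by rewrite /lo /hi -addn1 takeD sumn_cat leq_addr.
have hi_le_n : (hi <= n)%N.
  by rewrite -sum_alpha -[X in (_ <= sumn X)%N](cat_take_drop j.+1) sumn_cat leq_addr.
have [kap Lkap] := lambda_canon_rel x0 lo_le_hi hi_le_n lamL.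
move: L_nz; rewrite /restr Lkap.
case: (boolP (#|S0| == m)) => [/eqP S0m | _]; last by rewrite /= eqxx.
case: (boolP (between lo hi S0)) => [bS0 L_nz | _]; last by rewrite andbF mulr0 if_same eqxx.
have [lo_le_m m_le_hi] : (lo <= m)%N /\ (m <= hi)%N.
  case/andP: bS0 => /subset_leq_card + /subset_leq_card.
  by rewrite -S0m !card_lowS // (leq_trans lo_le_hi).
have kap_nz : kap != 0 by apply: contraNneq L_nz => ->; rewrite mul0r if_same.
have card_low_m : #|lowS n m| = m := card_lowS m_le_n.
have Am_low S : A m S (lowS n m) = c * kap * (S == lowS n m)%:R.
  rewrite Am /restr Lkap card_low_m eqxx andbT.
  have [->|S_ne] := eqVneq S (lowS n m).
    by rewrite card_low_m eqxx between_lowS ?mulr1 ?mulrA.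
  by rewrite /= !mulr0 if_same mulr0.
by split => [|S]; rewrite !Am_low eqxx mulr1 ?xi_degE ?mulf_neq0.
Qed.

End CanonHinge.

Section TensorEigen.
Variables (C : fieldType) (n : nat) (nu : seq nat).

Lemma degs_range d : d \in degs n nu -> (0 < d <= n)%N.
Proof.
case/flatten_mapP => j; rewrite mem_iota mem_nseq => /andP[j_gt0 j_lt] /andP[_ /eqP ->].
by rewrite j_gt0 -ltnS -(add1n n).
Qed.

Lemma r_nu_Xi_eigen (A : nat -> extop C n) (c : nat -> C) :
  (forall d, d \in degs n nu -> forall S, A d S (lowS n d) = c d * xi_deg C (n := n) d S) ->
  forall S, r_nu A (Xi C (nu := nu)) S =
    (\prod_(i < size (degs n nu)) c (nth 0%N (degs n nu) i)) * Xi C S.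
Proof.
move=> A_col S; pose T0 := [tuple lowS n (nth 0%N (degs n nu) i) | i < size (degs n nu)].
rewrite /r_nu (bigD1 T0) //= [X in _ + X]big1 ?addr0 => [|T T_ne]; last first.
  have [i Ti_ne] : exists i, tnth T i != tnth T0 i.
    apply/existsP; apply: contraR T_ne => /existsPn T_eq.
    by apply/eqP/eq_from_tnth => i; apply/eqP; rewrite -[_ == _]negbK T_eq.
  rewrite /Xi [X in _ * X](bigD1 i) //= xi_degE.
  by rewrite tnth_mktuple in Ti_ne; rewrite (negbTE Ti_ne) mul0r mulr0.
have -> : Xi C T0 = 1 by apply: big1 => i _; rewrite tnth_mktuple xi_degE eqxx.
rewrite mulr1 /Xi -big_split /=; apply: eq_bigr => i _.
by rewrite tnth_mktuple A_col // mem_nth.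
Qed.

End TensorEigen.

Unset Implicit Arguments.

Theorem lemma2p14 (R : rcfType) (n : nat) (alpha : seq nat) (nu : seq nat)
    (A : nat -> extop R[i] n) :
  all (fun a => 0 < a)%N alpha ->
  sumn alpha = n ->
  signature n nu ->
  nondeg_over (canon_hinge R[i] n alpha) A ->
  exists2 c : R[i], c != 0 &
    forall S, @r_nu R[i] n nu A (@Xi R[i] n nu) S = c * @Xi R[i] n nu S.
Proof.
move=> _ sum_alpha _ nondegA.
pose c d := A d (lowS n d) (lowS n d).
have A_col d : d \in degs n nu ->
    c d != 0 /\ forall S, A d S (lowS n d) = c d * xi_deg R[i] (n := n) d S.
  by move/degs_range; apply: nondeg_over_canon_col sum_alpha nondegA.
exists (\prod_(i < size (degs n nu)) c (nth 0%N (degs n nu) i)).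
  by apply/prodf_neq0 => i _; have [] := A_col _ (mem_nth 0%N (ltn_ord i)).
by apply: r_nu_Xi_eigen => d /A_col[].
Qed.
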